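(* If $\lambda$ is a singular cardinal and $\clubsuit\square_\lambda$ holds, then $2^\lambda=\lambda^+$.
   Context: For a set of ordinals $A$: $\operatorname{acc}(A)=\{\alpha\in A:\sup(A\cap\alpha)=\alpha\}$; $\operatorname{otp}(A)$ is its order type; $A(i)$ is the unique $\beta\in A$ with $\operatorname{otp}(A\cap\beta)=i$. A $\square_\lambda$-sequence is $\langle C_\alpha:\alpha<\lambda^+\rangle$ such that for every limit $\alpha<\lambda^+$, $C_\alpha$ is a club in $\alpha$ of order type $\le\lambda$, and $\beta\in\operatorname{acc}(C_\alpha)$ implies $C_\beta=C_\alpha\cap\beta$. $\clubsuit\square_\lambda$ asserts the existence of a $\square_\lambda$-sequence $\langle C_\alpha\rangle$ such that for every sequence $\langle A_i:i<\lambda\rangle$ of unbounded subsets of $\lambda^+$, every limit $\theta<\lambda$ and every club $D\subseteq\lambda^+$, there is $\alpha<\lambda^+$ with $\operatorname{otp}(C_\alpha)=\theta$ such that for all $i<\theta$: $C_\alpha(i+1)\in A_i$, and $C_\alpha(i)<\beta<C_\alpha(i+1)$ for some $\beta\in D$. *)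

(* Ordinals below lambda^+ are modelled by a type K with a
   strict well-order R whose order type is lambda^+; lambda itself is an
   element [lam : K] and the ordinal alpha is identified with the initial
   segment {x | R x alpha}. *)
From Stdlib Require Import Classical.

Unset Implicit Arguments.

Section Ord.
Context {K : Type} (R : K -> K -> Prop).

Definition le (x y : K) : Prop := R x y \/ x = y.

Definition strict_wellorder : Prop :=
  (forall x, ~ R x x) /\
  (forall x y z, R x y -> R y z -> R x z) /\
  (forall x y, R x y \/ x = y \/ R y x) /\
  well_founded R.

Definition seg (a : K) : Type := { x : K | R x a }.

Definition injects (A B : Type) : Prop :=
  exists f : A -> B, forall a b, f a = f b -> a = b.

Definition is_limit (a : K) : Prop :=
  (exists x, R x a) /\ (forall x, R x a -> exists y, R x y /\ R y a).

Definition is_cardinal (a : K) : Prop :=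
  forall b, R b a -> ~ injects (seg a) (seg b).

Definition is_successor_cardinal_of (lam : K) : Prop :=
  (forall a, injects (seg a) (seg lam)) /\ ~ injects K (seg lam).

Definition singular_cardinal (lam : K) : Prop :=
  is_limit lam /\ is_cardinal lam /\
  exists mu, R mu lam /\
    exists f : seg mu -> seg lam,
      forall x, R x lam -> exists i, le x (proj1_sig (f i)).

Definition sup_below_eq (A : K -> Prop) (a : K) : Prop :=
  forall z, R z a -> exists y, A y /\ R y a /\ R z y.

Definition acc_pt (A : K -> Prop) (a : K) : Prop := A a /\ sup_below_eq A a.

Definition club_in (C : K -> Prop) (a : K) : Prop :=
  (forall x, C x -> R x a) /\
  (forall x, R x a -> exists y, C y /\ le x y) /\
  (forall g, R g a -> is_limit g -> sup_below_eq C g -> C g).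

Definition club (D : K -> Prop) : Prop :=
  (forall x, exists y, D y /\ le x y) /\
  (forall g, is_limit g -> sup_below_eq D g -> D g).

Definition unbounded (A : K -> Prop) : Prop :=
  forall x, exists y, A y /\ le x y.

Definition otp_le (A : K -> Prop) (lam : K) : Prop :=
  exists f : {x : K | A x} -> seg lam,
    forall a b, R (proj1_sig a) (proj1_sig b) ->
                R (proj1_sig (f a)) (proj1_sig (f b)).

(* e : theta -> A is the order isomorphism witnessing otp(A) = theta,
   so that e i = A(i) *)
Definition otp_iso (theta : K) (A : K -> Prop) (e : seg theta -> K) : Prop :=
  (forall i j : seg theta, R (proj1_sig i) (proj1_sig j) -> R (e i) (e j)) /\
  (forall i, A (e i)) /\
  (forall y, A y -> exists i, e i = y).

Definition square_seq (lam : K) (C : K -> K -> Prop) : Prop :=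
  forall a, is_limit a ->
    club_in (C a) a /\ otp_le (C a) lam /\
    (forall b, acc_pt (C a) b -> forall x, C b x <-> (C a x /\ R x b)).

(* clubsuit-square_lam; j is i+1 (the immediate successor of i, which is < theta
   since theta is a limit) *)
Definition clubsuit_square (lam : K) : Prop :=
  exists C : K -> K -> Prop, square_seq lam C /\
    forall A : K -> K -> Prop,
      (forall i, R i lam -> unbounded (A i)) ->
      forall theta, R theta lam -> is_limit theta ->
      forall D, club D ->
        exists a : K, exists e : seg theta -> K, otp_iso theta (C a) e /\
          forall i j : seg theta,
            R (proj1_sig i) (proj1_sig j) ->
            (forall k, ~ (R (proj1_sig i) k /\ R k (proj1_sig j))) ->
            A (proj1_sig i) (e j) /\
            exists b, D b /\ R (e i) b /\ R b (e j).

End Ord.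

From Stdlib Require Import Classical ClassicalEpsilon FunctionalExtensionality ProofIrrelevance Arith Lia Cantor FinFun.

(** Hessenberg's theorem gives an injective pairing [Psi] of lambda^+ whose rows
    [row v = Psi (v, _)] are lambda^+ pairwise disjoint unbounded sets.  For a limit
    [t < lambda] and [s : t -> lambda^+], applying the guessing clause of
    clubsuit-square to the rows [row (s i)] yields an [a] such that [C a] determines
    [s]; hence (lambda^+)^t <= lambda^+.  Since lambda > omega is a limit cardinal,
    every bounded initial segment of [X : lambda -> bool] is coded this way by an
    element of lambda^+, and [X] is determined by the codes of its initial segments
    along a cofinal map cf(lambda) -> lambda, with cf(lambda) < lambda.  So
    2^lambda <= lambda^+, and Cantor's theorem gives equality. *)

Definition embeds {X Y} (A : X -> Prop) (B : Y -> Prop) : Prop :=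
  exists f : X -> Y, (forall x, A x -> B (f x)) /\
    (forall x y, A x -> A y -> f x = f y -> x = y).

Definition sum_pred {X Y} (A : X -> Prop) (B : Y -> Prop) (u : X + Y) : Prop :=
  match u with inl x => A x | inr y => B y end.

Lemma embeds_trans {X Y Z} (A : X -> Prop) (B : Y -> Prop) (C : Z -> Prop) :
  embeds A B -> embeds B C -> embeds A C.
Proof.
  intros [f [Hf1 Hf2]] [g [Hg1 Hg2]]. exists (fun x => g (f x)). split; auto.
Qed.

Lemma embeds_subset {X} (A B : X -> Prop) : (forall x, A x -> B x) -> embeds A B.
Proof. intros H. exists (fun x => x). split; auto. Qed.

Lemma embeds_prod {X Y X' Y'} (A : X -> Prop) (B : Y -> Prop) (A' : X' -> Prop) (B' : Y' -> Prop) :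
  embeds A B -> embeds A' B' ->
  embeds (fun p => A (fst p) /\ A' (snd p)) (fun q => B (fst q) /\ B' (snd q)).
Proof.
  intros [f [Hf1 Hf2]] [g [Hg1 Hg2]].
  exists (fun p => (f (fst p), g (snd p))). split.
  - intros [x y] [H1 H2]; simpl in *; auto.
  - intros [x y] [x' y'] [H1 H2] [H3 H4] E; simpl in *. injection E; intros.
    f_equal; auto.
Qed.

Lemma embeds_union {X Y Z} (A P : X -> Prop) (B : Y -> Prop) (C : Z -> Prop) :
  embeds (fun x => A x /\ P x) B -> embeds (fun x => A x /\ ~ P x) C -> embeds A (sum_pred B C).
Proof.
  intros [f [Hf1 Hf2]] [g [Hg1 Hg2]].
  exists (fun x => if excluded_middle_informative (P x) then inl (f x) else inr (g x)). split.
  - intros x Hx. destruct (excluded_middle_informative (P x)); simpl; auto.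
  - intros x y Hx Hy.
    destruct (excluded_middle_informative (P x)), (excluded_middle_informative (P y));
      intros E; try discriminate; injection E; auto.
Qed.

Lemma embeds_of_cover {X Y} (i : inhabited X) (A : X -> Prop) (B : Y -> Prop) (Rel : X -> Y -> Prop) :
  (forall y, B y -> exists x, A x /\ Rel x y) ->
  (forall x y y', Rel x y -> Rel x y' -> y = y') -> embeds B A.
Proof.
  intros Hcov Hfun. exists (fun y => epsilon i (fun x => A x /\ Rel x y)). split.
  - intros y By. apply (epsilon_spec i (fun x => A x /\ Rel x y) (Hcov y By)).
  - intros y y' By By' E.
    destruct (epsilon_spec i (fun x => A x /\ Rel x y) (Hcov y By)) as [_ E1].
    destruct (epsilon_spec i (fun x => A x /\ Rel x y') (Hcov y' By')) as [_ E2].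
    rewrite E in E1. eauto.
Qed.

Lemma embeds_rec_range {W T} (lt : W -> W -> Prop) (w : W) (S : W -> Prop) (B : T -> Prop)
    (rec : forall w', lt w' w -> T) :
  (forall t, B t -> exists w' (h : lt w' w), S w' /\ rec w' h = t) ->
  embeds B (fun w' => lt w' w /\ S w').
Proof.
  intros Hcov.
  apply (embeds_of_cover (inhabits w) _ _ (fun w' t => exists h, rec w' h = t)).
  - intros t Bt. destruct (Hcov t Bt) as [w' [h [Sw' E]]]. eauto.
  - intros w' t t' [h1 E1] [h2 E2]. subst. f_equal. apply proof_irrelevance.
Qed.

Lemma wf_rec_choice {W T} (i : inhabited T) (lt : W -> W -> Prop) (wf : well_founded lt)
    (P : forall w, (forall w', lt w' w -> T) -> T -> Prop) :
  (forall w rec, exists t, P w rec t) ->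
  exists phi : W -> T, forall w, P w (fun w' _ => phi w') (phi w).
Proof.
  intros H.
  set (F := fun w (rec : forall w', lt w' w -> T) => epsilon i (P w rec)).
  exists (Fix wf (fun _ => T) F).
  intros w. rewrite Fix_eq.
  - apply epsilon_spec, H.
  - intros x f g Hfg. unfold F.
    replace f with g; [reflexivity|].
    apply functional_extensionality_dep; intro y; apply functional_extensionality_dep; intro h.
    symmetry; apply Hfg.
Qed.

Lemma injective_recursion {W T} (i : inhabited T) (lt : W -> W -> Prop) (wf : well_founded lt)
    (total : forall w w', w = w' \/ lt w w' \/ lt w' w) (S : W -> Prop) (Q : W -> T -> Prop) :
  (forall w, S w -> forall rec : forall w', lt w' w -> T,
     exists t, Q w t /\ forall w' (h : lt w' w), S w' -> rec w' h <> t) ->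
  exists phi : W -> T, (forall w, S w -> Q w (phi w)) /\
    (forall w w', S w -> S w' -> phi w = phi w' -> w = w').
Proof.
  intros H.
  destruct (wf_rec_choice i lt wf
      (fun w rec t => S w -> Q w t /\ forall w' (h : lt w' w), S w' -> rec w' h <> t))
    as [phi Hphi].
  { intros w rec. destruct (classic (S w)) as [Sw|Sw].
    - destruct (H w Sw rec) as [t Ht]. exists t; auto.
    - destruct i as [t]. exists t; tauto. }
  exists phi. split.
  - intros w Sw. apply (Hphi w Sw).
  - intros w w' Sw Sw' E. destruct (total w w') as [?|[Hlt|Hlt]]; auto; exfalso.
    + apply (proj2 (Hphi w' Sw') w Hlt Sw E).
    + apply (proj2 (Hphi w Sw) w' Hlt Sw' (eq_sym E)).
Qed.

Lemma cantor {X} (f : (X -> bool) -> X) : ~ (forall u v, f u = f v -> u = v).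
Proof.
  intros Hf.
  set (D := fun x => if excluded_middle_informative (exists u, f u = x /\ u x = true)
                     then false else true).
  assert (HD : D (f D) = true <-> ~ D (f D) = true).
  { unfold D at 1. destruct excluded_middle_informative as [[u [Eu Hu]]|N].
    - apply Hf in Eu. subst u. split; [discriminate|]. intros H. exfalso. apply H, Hu.
    - split; [intros _ HD; apply N; eauto|auto]. }
  tauto.
Qed.

Section Ordinals.
Variable K : Type.
Variable R : K -> K -> Prop.
Hypothesis WO : strict_wellorder R.

Lemma R_irrefl x : ~ R x x. Proof. apply WO. Qed.
Lemma R_trans x y z : R x y -> R y z -> R x z. Proof. apply WO. Qed.
Lemma R_total x y : R x y \/ x = y \/ R y x. Proof. apply WO. Qed.
Lemma R_wf : well_founded R. Proof. apply WO. Qed.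
Lemma R_asym x y : R x y -> ~ R y x.
Proof. intros H H'. apply (R_irrefl x). eapply R_trans; eauto. Qed.

Lemma le_trans x y z : le R x y -> le R y z -> le R x z.
Proof. unfold le; intros [H|H] [H'|H']; subst; eauto using R_trans. Qed.
Lemma le_R_trans x y z : le R x y -> R y z -> R x z.
Proof. unfold le; intros [H|H] H'; subst; eauto using R_trans. Qed.
Lemma R_le_trans x y z : R x y -> le R y z -> R x z.
Proof. unfold le; intros H [H'|H']; subst; eauto using R_trans. Qed.
Lemma not_R_le x y : ~ R x y -> le R y x.
Proof. intros H. unfold le. destruct (R_total x y) as [?|[?|?]]; auto; tauto. Qed.
Lemma R_of_not_le x y : ~ le R x y -> R y x.
Proof. intros H. destruct (R_total x y) as [?|[?|?]]; auto; exfalso; apply H; [left|right]; auto. Qed.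
Lemma le_not_R x y : le R x y -> ~ R y x.
Proof. intros [H|H] H'; subst; [eapply R_asym; eauto | eapply R_irrefl; eauto]. Qed.

Lemma minimal_exists (P : K -> Prop) x : P x -> exists m, P m /\ forall y, R y m -> ~ P y.
Proof.
  induction x as [x IH] using (well_founded_ind R_wf). intros Px.
  destruct (classic (exists y, R y x /\ P y)) as [[y [Ryx Py]]|N].
  - apply (IH y Ryx Py).
  - exists x; split; auto. intros y Ryx Py; apply N; eauto.
Qed.

Definition below (a : K) : K -> Prop := fun x => R x a.

Lemma embeds_of_injects a b : injects (seg R a) (seg R b) -> embeds (below a) (below b).
Proof.
  intros [f Hf].
  exists (fun x => match excluded_middle_informative (R x a) with
                   | left h => proj1_sig (f (exist _ x h)) | right _ => x end).
  split.
  - intros x Hx. destruct (excluded_middle_informative (R x a)) as [h|h]; [|tauto].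
    exact (proj2_sig (f (exist _ x h))).
  - intros x y Hx Hy. destruct (excluded_middle_informative (R x a)) as [h|h]; [|tauto].
    destruct (excluded_middle_informative (R y a)) as [h'|h']; [|tauto].
    intros E. apply eq_sig_hprop in E; [|intros; apply proof_irrelevance].
    apply Hf in E. injection E; auto.
Qed.

Lemma injects_of_embeds a b : embeds (below a) (below b) -> injects (seg R a) (seg R b).
Proof.
  intros [f [H1 H2]]. exists (fun x => exist _ (f (proj1_sig x)) (H1 _ (proj2_sig x))).
  intros [x hx] [y hy] E. injection E; intros E'. simpl in E'.
  assert (x = y) by (apply H2; auto). subst. f_equal. apply proof_irrelevance.
Qed.

Lemma injects_all_of_embeds b : embeds (fun _ : K => True) (below b) -> injects K (seg R b).
Proof.
  intros [f [H1 H2]]. exists (fun x => exist _ (f x) (H1 x I)).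
  intros x y E. injection E. intros; apply H2; auto.
Qed.

Lemma seg_eq a (i k : seg R a) : proj1_sig i = proj1_sig k -> i = k.
Proof. intros E. apply eq_sig_hprop; auto. intros; apply proof_irrelevance. Qed.

(* Junk when [x] is maximal. *)
Definition succ (x : K) : K :=
  epsilon (inhabits x) (fun y => R x y /\ forall z, R x z -> le R y z).

Lemma succ_spec x : (exists z, R x z) -> R x (succ x) /\ forall z, R x z -> le R (succ x) z.
Proof.
  intros [z Hz]. unfold succ. apply epsilon_spec.
  destruct (minimal_exists (fun y => R x y) z Hz) as [m [Hm1 Hm2]].
  exists m; split; auto. intros w Hw. apply not_R_le. intros Hw'. apply (Hm2 w Hw' Hw).
Qed.

Lemma succ_lt_limit a x : is_limit R a -> R x a -> R (succ x) a.
Proof.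
  intros [_ Ha] Hx. destruct (Ha x Hx) as [y [H1 H2]].
  destruct (succ_spec x (ex_intro _ a Hx)) as [_ H]. eapply le_R_trans; eauto.
Qed.

Lemma succ_inj_below a x y : R x a -> R y a -> succ x = succ y -> x = y.
Proof.
  intros Hx Hy E.
  destruct (succ_spec x (ex_intro _ a Hx)) as [Sx Lx].
  destruct (succ_spec y (ex_intro _ a Hy)) as [Sy Ly].
  destruct (R_total x y) as [H|[H|H]]; auto; exfalso.
  - apply (le_not_R _ _ (Lx y H)). rewrite E; auto.
  - apply (le_not_R _ _ (Ly x H)). rewrite <- E; auto.
Qed.

Definition rmax (x y : K) : K := if excluded_middle_informative (R x y) then y else x.

Lemma rmax_ge_l x y : le R x (rmax x y).
Proof. unfold rmax, le; destruct excluded_middle_informative; auto. Qed.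

Lemma rmax_ge_r x y : le R y (rmax x y).
Proof. unfold rmax; destruct excluded_middle_informative; [right; auto|apply not_R_le; auto]. Qed.

Lemma rmax_lt x y a : R x a -> R y a -> R (rmax x y) a.
Proof. unfold rmax; destruct excluded_middle_informative; auto. Qed.

Lemma finite_family_bounded a x0 n (h : nat -> K) : R x0 a ->
  (forall k, k < n -> R (h k) a) -> exists b, R b a /\ forall k, k < n -> le R (h k) b.
Proof.
  intros Hx0. induction n as [|n IH]; intros Hh.
  - exists x0. split; [auto|intros; lia].
  - destruct IH as [b [Hb Hbh]]; [intros; apply Hh; lia|].
    exists (rmax b (h n)). split; [apply rmax_lt; auto|].
    intros k Hk. destruct (Nat.eq_dec k n) as [->|Hkn]; [apply rmax_ge_r|].
    eapply le_trans; [apply Hbh; lia|apply rmax_ge_l].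
Qed.

Definition pmax (p : K * K) : K := rmax (fst p) (snd p).

Definition square (a : K) : K * K -> Prop := fun p => R (fst p) a /\ R (snd p) a.

Definition goedel_lt (p q : K * K) : Prop :=
  R (pmax p) (pmax q) \/
  (pmax p = pmax q /\ (R (fst p) (fst q) \/ (fst p = fst q /\ R (snd p) (snd q)))).

Lemma goedel_wf : well_founded goedel_lt.
Proof.
  assert (H : forall m x y, rmax x y = m -> Acc goedel_lt (x, y)).
  { intros m. induction m as [m IHm] using (well_founded_ind R_wf).
    intros x. induction x as [x IHx] using (well_founded_ind R_wf).
    intros y. induction y as [y IHy] using (well_founded_ind R_wf).
    intros Hm. constructor. intros [x' y'] HG. unfold goedel_lt, pmax in HG; simpl in HG.
    rewrite Hm in HG. destruct HG as [H1 | [H2 [H3 | [-> H5]]]]; eauto. }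
  intros [x y]. eapply H; eauto.
Qed.

Lemma goedel_total p q : p = q \/ goedel_lt p q \/ goedel_lt q p.
Proof.
  destruct p as [x y], q as [x' y']. unfold goedel_lt, pmax; simpl.
  destruct (R_total (rmax x y) (rmax x' y')) as [H|[H|H]]; auto.
  destruct (R_total x x') as [H1|[<-|H1]]; auto 6.
  destruct (R_total y y') as [H2|[<-|H2]]; auto 7.
Qed.

Definition initial (a : K) : Prop := forall b, R b a -> ~ embeds (below a) (below b).

Lemma initial_of_cardinal a : is_cardinal R a -> initial a.
Proof. intros Ha b Hb Hab. apply (Ha b Hb), injects_of_embeds, Hab. Qed.

Lemma otp_iso_unique t S e e' : otp_iso R t S e -> otp_iso R t S e' -> forall i, e i = e' i.
Proof.
  intros He He'.
  assert (Hle : forall e e', otp_iso R t S e -> otp_iso R t S e' -> forall i, ~ R (e' i) (e i)).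
  { clear e e' He He'. intros e e' [Mono [_ Onto]] [Mono' [In' _]] i.
    remember (proj1_sig i) as x eqn:Ex. revert i Ex.
    induction x as [x IH] using (well_founded_ind R_wf). intros i -> Hlt.
    destruct (Onto (e' i) (In' i)) as [k Ek].
    destruct (R_total (proj1_sig k) (proj1_sig i)) as [Hki|[Hki|Hki]].
    - apply (IH _ Hki k eq_refl). rewrite Ek. apply Mono', Hki.
    - apply seg_eq in Hki. subst k. rewrite Ek in Hlt. apply (R_irrefl _ Hlt).
    - apply (R_asym _ _ Hlt). rewrite <- Ek. apply Mono, Hki. }
  intros i. destruct (R_total (e i) (e' i)) as [H|[H|H]]; auto; exfalso.
  - apply (Hle e' e He' He i H).
  - apply (Hle e e' He He' i H).
Qed.

Section SuccessorCardinal.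
Variable lam : K.
Hypothesis Hsc : is_successor_cardinal_of R lam.
Hypothesis Hlim : is_limit R lam.

Definition zero : K := epsilon (inhabits lam) (fun m => forall y, ~ R y m).

Lemma zero_minimal y : ~ R y zero.
Proof.
  revert y. unfold zero. apply (epsilon_spec (inhabits lam) (fun m => forall y, ~ R y m)).
  destruct (minimal_exists (fun _ => True) lam I) as [m [_ Hm]].
  exists m; intros y Hy; apply (Hm y Hy I).
Qed.

Lemma zero_le y : le R zero y.
Proof. apply not_R_le. apply zero_minimal. Qed.

Lemma zero_lt_lam : R zero lam.
Proof.
  destruct Hlim as [[x Hx] _]. eapply le_R_trans; [apply zero_le|exact Hx].
Qed.

Lemma embeds_below_lam a : embeds (below a) (below lam).
Proof. apply embeds_of_injects, Hsc. Qed.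

Lemma not_embeds_all_below_lam : ~ embeds (fun _ : K => True) (below lam).
Proof. intros H. apply Hsc, injects_all_of_embeds, H. Qed.

Lemma embeds_below_lam_add_point : embeds (sum_pred (below lam) (fun _ : unit => True)) (below lam).
Proof.
  exists (fun u => match u with inl y => succ y | inr _ => zero end). split.
  - intros [y|[]] Hy; simpl in *; [apply succ_lt_limit; auto|apply zero_lt_lam].
  - assert (Hne : forall y, R y lam -> succ y <> zero).
    { intros y Hy E. apply (zero_minimal y). rewrite <- E.
      apply (succ_spec y (ex_intro _ lam Hy)). }
    intros [y|[]] [y'|[]] Hy Hy' E; simpl in *; try reflexivity.
    + f_equal. apply (succ_inj_below lam); auto.
    + exfalso; apply (Hne y); auto.
    + exfalso; apply (Hne y'); auto.
Qed.

Lemma no_maximum x : exists y, R x y.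
Proof.
  apply NNPP; intros N. apply not_embeds_all_below_lam.
  eapply embeds_trans; [|apply embeds_below_lam_add_point].
  apply (embeds_union _ (below x)).
  - eapply embeds_trans; [|apply (embeds_below_lam x)]. apply embeds_subset; tauto.
  - exists (fun _ => tt). split; [simpl; auto|].
    intros y y' [_ Hy] [_ Hy'] _.
    destruct (not_R_le _ _ (fun H => N (ex_intro _ y H))) as [H|H]; [contradiction|].
    destruct (not_R_le _ _ (fun H => N (ex_intro _ y' H))) as [H'|H']; [contradiction|].
    congruence.
Qed.

Lemma R_succ x : R x (succ x).
Proof. apply (succ_spec x (no_maximum x)). Qed.

Lemma succ_least x z : R x z -> le R (succ x) z.
Proof. apply (succ_spec x (no_maximum x)). Qed.

Lemma le_of_R_succ x y : R y (succ x) -> le R y x.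
Proof.
  intros Hy. apply not_R_le. intros H. apply (le_not_R _ _ (succ_least x y H) Hy).
Qed.

Definition succ_iter (c : K) (n : nat) : K := Nat.iter n succ c.

Lemma succ_iter_mono c n m : n < m -> R (succ_iter c n) (succ_iter c m).
Proof.
  induction m as [|m IH]; intros H; [lia|]. simpl.
  destruct (Nat.eq_dec n m); [subst; apply R_succ|].
  eapply R_trans; [apply IH; lia|apply R_succ].
Qed.

Lemma succ_iter_inj c n m : succ_iter c n = succ_iter c m -> n = m.
Proof.
  intros E. destruct (Nat.lt_trichotomy n m) as [H|[H|H]]; auto; exfalso;
    apply (succ_iter_mono c) in H; rewrite E in H; eapply R_irrefl; eauto.
Qed.

Definition fin (n : nat) : K := succ_iter zero n.

Lemma below_fin n y : R y (fin n) -> exists k, k < n /\ y = fin k.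
Proof.
  induction n as [|n IH]; intros H.
  - exfalso. apply (zero_minimal y H).
  - apply le_of_R_succ in H. destruct H as [H|H].
    + destruct (IH H) as [k [Hk E]]. exists k; split; auto.
    + exists n; split; auto.
Qed.

Lemma lam_neq_fin n : lam <> fin n.
Proof.
  destruct n as [|n]; intros E.
  - destruct Hlim as [[x Hx] _]. rewrite E in Hx. apply (zero_minimal x Hx).
  - assert (Hn : R (fin n) lam) by (rewrite E; apply R_succ).
    destruct (proj2 Hlim _ Hn) as [y [H1 H2]]. rewrite E in H2. apply le_of_R_succ in H2.
    eapply le_not_R; eauto.
Qed.

Definition omega : K :=
  epsilon (inhabits lam) (fun w => (forall n, w <> fin n) /\ forall y, R y w -> exists n, y = fin n).

Lemma omega_spec : (forall n, omega <> fin n) /\ forall y, R y omega -> exists n, y = fin n.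
Proof.
  unfold omega. apply epsilon_spec.
  destruct (minimal_exists (fun w => forall n, w <> fin n) lam lam_neq_fin) as [m [Hm1 Hm2]].
  exists m; split; auto. intros y Hy. apply NNPP; intros N. apply (Hm2 y Hy).
  intros n E; apply N; eauto.
Qed.

Lemma below_omega y : R y omega -> exists n, y = fin n.
Proof. apply omega_spec. Qed.

Lemma fin_lt_omega n : R (fin n) omega.
Proof.
  destruct omega_spec as [H1 _]. destruct (R_total (fin n) omega) as [H|[H|H]]; auto.
  - exfalso; apply (H1 n); auto.
  - destruct (below_fin n omega H) as [k [_ E]]. exfalso; apply (H1 k); auto.
Qed.

Lemma omega_le_lam : le R omega lam.
Proof.
  apply not_R_le. intros H. destruct (below_omega lam H) as [n E]. apply (lam_neq_fin n E).
Qed.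

Lemma omega_limit : is_limit R omega.
Proof.
  split.
  - exists (fin 0); apply fin_lt_omega.
  - intros x Hx. destruct (below_omega x Hx) as [n ->]. exists (fin (S n)); split.
    + apply succ_iter_mono; lia.
    + apply fin_lt_omega.
Qed.

Definition fin_index (x : K) : nat := epsilon (inhabits 0) (fun n => x = fin n).

Lemma fin_index_spec x : R x omega -> x = fin (fin_index x).
Proof.
  intros H. unfold fin_index. apply (epsilon_spec (inhabits 0) (fun n => x = fin n)).
  apply below_omega; auto.
Qed.

Lemma fin_index_fin n : fin_index (fin n) = n.
Proof. apply (succ_iter_inj zero). symmetry. apply fin_index_spec, fin_lt_omega. Qed.

Lemma omega_not_embeds_fin n : ~ embeds (below omega) (below (fin n)).
Proof.
  intros [f [Hf1 Hf2]].
  set (g := fun k => fin_index (f (fin k))).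
  assert (Hg : forall k, f (fin k) = fin (g k) /\ g k < n).
  { intros k. destruct (below_fin n _ (Hf1 (fin k) (fin_lt_omega k))) as [j [Hj E]].
    unfold g. rewrite E, fin_index_fin. auto. }
  assert (Hinj : bInjective (S n) g).
  { intros x y _ _ E. apply (succ_iter_inj zero). change (fin x = fin y).
    apply Hf2; try apply fin_lt_omega. rewrite (proj1 (Hg x)), (proj1 (Hg y)); congruence. }
  assert (Hfun : bFun (S n) g) by (intros k _; pose proof (proj2 (Hg k)); lia).
  destruct (proj1 (bInjective_bSurjective Hfun) Hinj n) as [k [_ Hk]]; [lia|].
  pose proof (proj2 (Hg k)). lia.
Qed.

Lemma embeds_add_omega a : le R omega a ->
  embeds (sum_pred (below a) (fun _ : nat => True)) (below a).
Proof.
  intros Ha.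
  assert (Hfin : forall n, R (fin n) a) by (intros; eapply R_le_trans; [apply fin_lt_omega|auto]).
  (* Hilbert's hotel: finite ordinals move to even positions, new points take the odd ones *)
  exists (fun u => match u with
    | inl x => if excluded_middle_informative (R x omega) then fin (2 * fin_index x) else x
    | inr n => fin (2 * n + 1) end).
  split.
  - intros [x|n] Hx; [|apply Hfin].
    simpl. destruct (excluded_middle_informative (R x omega)); [apply Hfin|exact Hx].
  - assert (Hfin_lt : forall x n, ~ R x omega -> x <> fin n)
      by (intros x n Hx E; apply Hx; rewrite E; apply fin_lt_omega).
    intros [x|n] [y|m] Hx Hy; simpl in *;
      repeat destruct (excluded_middle_informative _); intros E;
      try (exfalso; eapply Hfin_lt; eauto; fail).
    + apply (succ_iter_inj zero) in E. f_equal.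
      rewrite (fin_index_spec x), (fin_index_spec y); auto. f_equal; lia.
    + f_equal; auto.
    + apply (succ_iter_inj zero) in E. lia.
    + apply (succ_iter_inj zero) in E. lia.
    + apply (succ_iter_inj zero) in E. f_equal; lia.
Qed.

Lemma omega_le_of_embeds a b : le R omega a -> embeds (below a) (below b) -> le R omega b.
Proof.
  intros Ha Hab. apply not_R_le. intros Hb.
  destruct (below_omega b Hb) as [n ->]. apply (omega_not_embeds_fin n).
  eapply embeds_trans; [|exact Hab]. apply embeds_subset.
  intros x Hx. eapply R_le_trans; eauto.
Qed.

Lemma goedel_lt_square_succ p q : goedel_lt p q -> square (succ (pmax q)) p.
Proof.
  intros HG.
  assert (Hle : le R (pmax p) (pmax q)) by (destruct HG as [H|[H _]]; [left|right]; auto).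
  split; eapply le_R_trans; try apply R_succ; eapply le_trans; try exact Hle;
    [apply rmax_ge_l|apply rmax_ge_r].
Qed.

Lemma hessenberg_omega : embeds (square omega) (below omega).
Proof.
  exists (fun p => fin (Cantor.to_nat (fin_index (fst p), fin_index (snd p)))). split.
  - intros p _. apply fin_lt_omega.
  - intros [x y] [x' y'] [Hx Hy] [Hx' Hy'] E. cbn [fst snd] in *.
    apply (succ_iter_inj zero), (f_equal Cantor.of_nat) in E.
    rewrite !Cantor.cancel_of_to in E. injection E as E1 E2.
    rewrite (fin_index_spec x), (fin_index_spec y), (fin_index_spec x'), (fin_index_spec y'),
      E1, E2; auto.
Qed.

Lemma succ_lt_initial a m : le R omega a -> initial a -> R m a -> R (succ m) a.
Proof.
  intros Ha Hin Hm. destruct (succ_least m a Hm) as [H|H]; auto. exfalso.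
  destruct (classic (R m omega)) as [Hmo|Hmo].
  - apply (le_not_R _ _ Ha). rewrite <- H. apply succ_lt_limit; auto using omega_limit.
  - apply (Hin m Hm). rewrite <- H.
    eapply embeds_trans; [|apply (embeds_add_omega m (not_R_le _ _ Hmo))].
    apply (embeds_union _ (below m)).
    + apply embeds_subset; tauto.
    + exists (fun _ => 0). split; [simpl; auto|].
      intros y y' [Hy Hy'] [Hz Hz'] _. unfold below in *.
      destruct (le_of_R_succ m y Hy), (le_of_R_succ m y' Hz); congruence.
Qed.

Section HessenbergStep.
Variable a : K.
Hypothesis Ha : R omega a.
Hypothesis Hin : initial a.
Hypothesis IH : forall b, R b a -> le R omega b -> embeds (square b) (below b).

Lemma goedel_segment_small w : square a w ->
  exists c, R c a /\ embeds (fun w' => goedel_lt w' w /\ square a w') (below c).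
Proof.
  intros [Hx Hy].
  set (c := succ (pmax w)).
  assert (Hc : R c a) by (apply succ_lt_initial; [left; auto|auto|apply rmax_lt; auto]).
  assert (Hseg : embeds (fun w' => goedel_lt w' w /\ square a w') (square c))
    by (apply embeds_subset; intros w' [HG _]; apply goedel_lt_square_succ, HG).
  destruct (classic (R c omega)) as [Hco|Hco].
  - exists omega. split; auto.
    eapply embeds_trans; [exact Hseg|]. eapply embeds_trans; [|apply hessenberg_omega].
    apply embeds_subset. intros [u v] [Hu Hv]; split; eapply R_trans; eauto.
  - exists c. split; auto. eapply embeds_trans; [exact Hseg|].
    apply IH; [auto|apply not_R_le; auto].
Qed.

Lemma hessenberg_step : embeds (square a) (below a).
Proof.
  destruct (injective_recursion (inhabits a) goedel_lt goedel_wf goedel_total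
              (square a) (fun _ t => R t a)) as [phi [Hphi1 Hphi2]].
  - intros w Hw rec. destruct (goedel_segment_small w Hw) as [c [Hc Hsmall]].
    apply NNPP. intros N. apply (Hin c Hc).
    eapply embeds_trans; [|exact Hsmall].
    apply embeds_rec_range with (rec := rec).
    intros t Ht. apply NNPP. intros N2. apply N. exists t. split; auto.
    intros w' h Hw' E. apply N2. eauto.
  - exists phi. split; auto.
Qed.

End HessenbergStep.

Theorem hessenberg a : le R omega a -> embeds (square a) (below a).
Proof.
  induction a as [a IH] using (well_founded_ind R_wf). intros Ha.
  destruct (classic (exists b, R b a /\ embeds (below a) (below b))) as [[b [Hb Hab]]|Hin].
  - assert (Hb' := omega_le_of_embeds a b Ha Hab).
    eapply embeds_trans; [apply (embeds_prod _ _ _ _ Hab Hab)|].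
    eapply embeds_trans; [exact (IH b Hb Hb')|].
    apply embeds_subset. intros x Hx. eapply R_trans; eauto.
  - destruct Ha as [Ha| <-]; [|apply hessenberg_omega].
    apply hessenberg_step; auto. intros b Hb Hab. apply Hin. eauto.
Qed.

Lemma embeds_square_lam : embeds (square lam) (below lam).
Proof. apply hessenberg, omega_le_lam. Qed.

Lemma embeds_sum_below_lam : embeds (sum_pred (below lam) (below lam)) (below lam).
Proof.
  eapply embeds_trans; [|apply embeds_square_lam].
  assert (H1 : R (succ zero) lam) by (apply succ_lt_limit, zero_lt_lam; auto).
  assert (H01 : zero <> succ zero) by (intros E; apply (R_irrefl zero); rewrite E at 2; apply R_succ).
  exists (fun u => match u with inl x => (x, zero) | inr x => (x, succ zero) end). split.
  - intros [x|x] Hx; split; simpl; auto using zero_lt_lam.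
  - intros [x|x] [y|y] _ _ E; injection E; intros; subst; auto; congruence.
Qed.

Lemma pairing_exists : exists Psi : K * K -> K,
  (forall v g, le R g (Psi (v, g))) /\ (forall p q, Psi p = Psi q -> p = q).
Proof.
  destruct (injective_recursion (inhabits lam) goedel_lt goedel_wf goedel_total
              (fun _ => True) (fun w t => le R (snd w) t)) as [phi [Hphi1 Hphi2]].
  - intros [v g] _ rec. apply NNPP. intros N. apply not_embeds_all_below_lam.
    eapply embeds_trans; [|apply embeds_sum_below_lam].
    apply (embeds_union _ (below g)).
    + eapply embeds_trans; [|apply (embeds_below_lam g)]. apply embeds_subset; tauto.
    + eapply embeds_trans; [apply embeds_rec_range with (S := fun _ => True) (rec := rec)|].
      * intros t [_ Ht]. apply NNPP. intros N2. apply N. exists t. split; [apply not_R_le, Ht|].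
        intros w' h _ E. apply N2. eauto.
      * eapply embeds_trans; [|apply embeds_square_lam].
        set (c := succ (pmax (v, g))).
        apply embeds_trans with (B := square c);
          [|exact (embeds_prod _ _ _ _ (embeds_below_lam c) (embeds_below_lam c))].
        apply embeds_subset. intros w' [HG _]. apply goedel_lt_square_succ, HG.
  - exists phi. split.
    + intros v g. apply (Hphi1 (v, g) I).
    + intros p q. apply Hphi2; auto.
Qed.

Lemma powerset_not_embeds_below_lam : ~ embeds (fun _ : seg R lam -> bool => True) (below lam).
Proof.
  intros [f [H1 H2]]. apply (cantor (fun u => exist _ (f u) (H1 u I))).
  intros u v E. injection E. auto.
Qed.

Section PowersetBijection.
Variable h : (seg R lam -> bool) -> K.
Hypothesis h_inj : forall u v, h u = h v -> u = v.

Lemma fresh_subset_exists x (rec : forall y, R y x -> seg R lam -> bool) :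
  exists u, forall y (p : R y x), rec y p <> u.
Proof.
  apply NNPP. intros N. apply powerset_not_embeds_below_lam.
  eapply embeds_trans; [|apply (embeds_below_lam x)].
  eapply embeds_trans; [apply embeds_rec_range with (S := fun _ => True) (rec := rec)|].
  - intros u _. apply NNPP. intros N2. apply N. exists u. intros y p E. apply N2. eauto.
  - apply embeds_subset. unfold below. tauto.
Qed.

(* Enumerate the subsets along K, each time taking a fresh one of least [h]-code;
   minimality forces every subset to be reached. *)
Lemma bijection_of_injection : exists f : (seg R lam -> bool) -> K,
  (forall u v, f u = f v -> u = v) /\ (forall y, exists u, f u = y).
Proof.
  destruct (wf_rec_choice (inhabits (fun _ => true)) R R_wf
    (fun x rec u => (forall y (p : R y x), rec y p <> u) /\
       forall u', (forall y (p : R y x), rec y p <> u') -> le R (h u) (h u'))) as [g Hg].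
  { intros x rec. destruct (fresh_subset_exists x rec) as [u0 Hu0].
    destruct (minimal_exists (fun k => exists u, (forall y (p : R y x), rec y p <> u) /\ h u = k)
                (h u0)) as [m [[u [Hu Em]] Hm]]; [eauto|].
    exists u. split; auto. intros u' Hu'. apply not_R_le. intros Hlt. subst m.
    apply (Hm (h u') Hlt). eauto. }
  assert (g_inj : forall x y, g x = g y -> x = y).
  { intros x y E. destruct (R_total x y) as [H|[H|H]]; auto; exfalso.
    - apply (proj1 (Hg y) x H E).
    - apply (proj1 (Hg x) y H (eq_sym E)). }
  assert (g_surj : forall u, exists x, g x = u).
  { intros u. apply NNPP. intros N. apply not_embeds_all_below_lam.
    eapply embeds_trans; [|apply (embeds_below_lam (h u))].
    exists (fun x => h (g x)). split.
    - intros x _. assert (Hle : le R (h (g x)) (h u)) by (apply (proj2 (Hg x)); eauto).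
      destruct Hle as [Hlt|E]; auto. exfalso. apply N. exists x. apply h_inj, E.
    - intros x y _ _ E. apply g_inj, h_inj, E. }
  exists (fun u => epsilon (inhabits lam) (fun x => g x = u)). split.
  - intros u v E.
    rewrite <- (epsilon_spec (inhabits lam) (fun x => g x = u) (g_surj u)), E.
    apply (epsilon_spec (inhabits lam) (fun x => g x = v) (g_surj v)).
  - intros y. exists (g y). apply g_inj.
    apply (epsilon_spec (inhabits lam) (fun x => g x = g y) (ex_intro _ y eq_refl)).
Qed.

End PowersetBijection.

Lemma successor_chain c : (forall t, le R c t -> R t lam -> ~ is_limit R t) ->
  forall x, le R c x -> R x lam -> exists n, x = succ_iter c n.
Proof.
  intros Hnolim x. induction x as [x IH] using (well_founded_ind R_wf). intros Hcx Hx.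
  destruct Hcx as [Hcx| <-]; [|exists 0; reflexivity].
  assert (Hpred : exists y, R y x /\ forall z, ~ (R y z /\ R z x)).
  { apply NNPP. intros N. apply (Hnolim x (or_introl Hcx) Hx). split; [exists c; auto|].
    intros y Hy. apply NNPP. intros N2. apply N. exists y. split; auto.
    intros z Hz. apply N2. eauto. }
  destruct Hpred as [y [Hyx Hy]].
  assert (Ex : succ y = x)
    by (destruct (succ_least y x Hyx) as [H|H]; auto; exfalso; apply (Hy (succ y)); split; auto using R_succ).
  assert (Hcy : le R c y).
  { apply not_R_le. intros H. apply (le_not_R _ _ (succ_least y c H)). rewrite Ex; auto. }
  destruct (IH y Hyx Hcy (R_trans _ _ _ Hyx Hx)) as [n En].
  exists (S n). simpl. rewrite <- En. auto.
Qed.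

Section Singular.
Hypothesis Hsing : singular_cardinal R lam.

Lemma omega_lt_lam : R omega lam.
Proof.
  destruct omega_le_lam as [H|H]; auto. exfalso.
  destruct Hsing as [_ [_ [mu [Hmu [f Hf]]]]].
  rewrite <- H in Hmu. destruct (below_omega mu Hmu) as [n ->].
  set (h := fun k => match excluded_middle_informative (R (fin k) (fin n)) with
                     | left p => proj1_sig (f (exist _ (fin k) p)) | right _ => zero end).
  destruct (finite_family_bounded lam zero n h zero_lt_lam) as [b [Hb Hbh]].
  { intros k _. unfold h. destruct excluded_middle_informative as [p|p];
      [apply (proj2_sig (f _))|apply zero_lt_lam]. }
  destruct (Hf (succ b) (succ_lt_limit lam b Hlim Hb)) as [[i Hi] Hfi]. simpl in Hfi.
  destruct (below_fin n i Hi) as [k [Hk ->]].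
  specialize (Hbh k Hk). unfold h in Hbh.
  destruct excluded_middle_informative as [p|p]; [|contradiction].
  rewrite (seg_eq _ (exist _ (fin k) p) (exist _ (fin k) Hi) eq_refl) in Hbh.
  apply (le_not_R _ _ (le_trans _ _ _ Hfi Hbh)), R_succ.
Qed.

Lemma limit_between c : R c lam -> exists t, is_limit R t /\ le R c t /\ R t lam.
Proof.
  intros Hc. destruct (classic (le R c omega)) as [Hco|Hco].
  { exists omega. auto using omega_limit, omega_lt_lam. }
  apply NNPP. intros N.
  assert (Hchain := successor_chain c (fun t Hct Ht Hl => N (ex_intro _ t (conj Hl (conj Hct Ht))))).
  destruct Hsing as [_ [Hcard _]]. apply (initial_of_cardinal lam Hcard c Hc).
  eapply embeds_trans; [|apply (embeds_add_omega c (or_introl (R_of_not_le _ _ Hco)))].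
  apply (embeds_union _ (below c)); [apply embeds_subset; tauto|].
  exists (fun x => epsilon (inhabits 0) (fun n => x = succ_iter c n)). split; [simpl; auto|].
  intros x y [Hx Hx'] [Hy Hy'] E.
  rewrite (epsilon_spec (inhabits 0) _ (Hchain x (not_R_le _ _ Hx') Hx)),
    (epsilon_spec (inhabits 0) _ (Hchain y (not_R_le _ _ Hy') Hy)), E.
  reflexivity.
Qed.

Section Guessing.
Variable C : K -> K -> Prop.
Hypothesis guessing : forall A : K -> K -> Prop,
  (forall i, R i lam -> unbounded R (A i)) ->
  forall theta, R theta lam -> is_limit R theta ->
  forall D, club R D ->
    exists a : K, exists e : seg R theta -> K, otp_iso R theta (C a) e /\
      forall i j : seg R theta,
        R (proj1_sig i) (proj1_sig j) ->
        (forall k, ~ (R (proj1_sig i) k /\ R k (proj1_sig j))) ->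
        A (proj1_sig i) (e j) /\
        exists b, D b /\ R (e i) b /\ R b (e j).
Variable Psi : K * K -> K.
Hypothesis Psi_ge : forall v g, le R g (Psi (v, g)).
Hypothesis Psi_inj : forall p q, Psi p = Psi q -> p = q.

Definition guesses (t : K) (A : K -> K -> Prop) (a : K) : Prop :=
  exists e : seg R t -> K, otp_iso R t (C a) e /\
    forall i j : seg R t, proj1_sig j = succ (proj1_sig i) -> A (proj1_sig i) (e j).

Lemma guesses_exists t A : R t lam -> is_limit R t ->
  (forall i, R i lam -> unbounded R (A i)) -> exists a, guesses t A a.
Proof.
  intros Ht Hl HA.
  assert (Hclub : club R (fun _ => True)) by (split; [intros x; exists x; split; [|right]|]; auto).
  destruct (guessing A HA t Ht Hl _ Hclub) as [a [e [He Hguess]]].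
  exists a, e. split; auto. intros i j Ej.
  apply Hguess; rewrite Ej; [apply R_succ|].
  intros k [Hik Hk]. apply (le_not_R _ _ (le_of_R_succ _ _ Hk) Hik).
Qed.

Definition row (v : K) : K -> Prop := fun x => exists g, x = Psi (v, g).

(* Rows are pairwise disjoint, so [C (guess t sq)] determines [sq] below [t]. *)
Definition guess (t : K) (sq : K -> K) : K :=
  epsilon (inhabits lam) (guesses t (fun i => row (sq i))).

Lemma guess_spec t sq : R t lam -> is_limit R t -> guesses t (fun i => row (sq i)) (guess t sq).
Proof.
  intros Ht Hl. unfold guess. apply epsilon_spec, guesses_exists; auto.
  intros i _ x. exists (Psi (sq i, x)). split; [exists x; auto|apply Psi_ge].
Qed.

Lemma guess_injective t sq sq' : R t lam -> is_limit R t -> guess t sq = guess t sq' ->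
  forall i, R i t -> sq i = sq' i.
Proof.
  intros Ht Hl E i Hi.
  destruct (guess_spec t sq Ht Hl) as [e [He Hrow]].
  destruct (guess_spec t sq' Ht Hl) as [e' [He' Hrow']].
  rewrite E in He.
  set (ii := exist (fun x => R x t) i Hi).
  set (jj := exist (fun x => R x t) (succ i) (succ_lt_limit t i Hl Hi)).
  destruct (Hrow ii jj eq_refl) as [g Eg]. destruct (Hrow' ii jj eq_refl) as [g' Eg'].
  rewrite (otp_iso_unique t _ e e' He He' jj), Eg' in Eg.
  apply Psi_inj in Eg. injection Eg. auto.
Qed.

Definition extend (X : seg R lam -> bool) (j : K) : bool :=
  match excluded_middle_informative (R j lam) with
  | left h => X (exist _ j h) | right _ => false end.

Definition bit (b : bool) : K := if b then succ zero else zero.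

Lemma bit_inj b b' : bit b = bit b' -> b = b'.
Proof.
  assert (H : succ zero <> zero) by (intros E; apply (R_irrefl zero); rewrite <- E at 2; apply R_succ).
  destruct b, b'; simpl; auto; intros E; exfalso; auto.
Qed.

Definition limit_above (c : K) : K :=
  epsilon (inhabits lam) (fun t => is_limit R t /\ R c t /\ R t lam).

Lemma limit_above_spec c : R c lam ->
  is_limit R (limit_above c) /\ R c (limit_above c) /\ R (limit_above c) lam.
Proof.
  intros Hc. unfold limit_above. apply epsilon_spec.
  destruct (limit_between (succ c) (succ_lt_limit lam c Hlim Hc)) as [t [Hl [Hct Ht]]].
  exists t. split; [|split]; auto. eapply R_le_trans; [apply R_succ|exact Hct].
Qed.

Definition code_upto (c : K) (X : seg R lam -> bool) : K :=
  guess (limit_above c) (fun j => if excluded_middle_informative (le R j c) then bit (extend X j) else zero).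

Lemma code_upto_inj c X Y : R c lam -> code_upto c X = code_upto c Y ->
  forall j, le R j c -> extend X j = extend Y j.
Proof.
  intros Hc E j Hj. destruct (limit_above_spec c Hc) as [Hl [Hct Ht]].
  pose proof (guess_injective _ _ _ Ht Hl E j (le_R_trans _ _ _ Hj Hct)) as H. simpl in H.
  destruct (excluded_middle_informative (le R j c)); [|tauto]. apply bit_inj, H.
Qed.

Lemma powerset_injection : exists h : (seg R lam -> bool) -> K, forall X Y, h X = h Y -> X = Y.
Proof.
  destruct Hsing as [_ [_ [mu [Hmu [f Hf]]]]].
  destruct (limit_between mu Hmu) as [t [Hl [Hmut Ht]]].
  set (F := fun i => match excluded_middle_informative (R i mu) with
                     | left h => proj1_sig (f (exist _ i h)) | right _ => zero end).
  (* A subset is determined by its initial segments along the cofinal map [f]. *)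
  exists (fun X => guess t (fun i => code_upto (F i) X)).
  intros X Y E. apply functional_extensionality. intros [y hy].
  destruct (Hf y hy) as [[i hi] Hle]. simpl in Hle.
  pose proof (guess_injective _ _ _ Ht Hl E i (R_le_trans _ _ _ hi Hmut)) as Hc. simpl in Hc.
  assert (EF : F i = proj1_sig (f (exist _ i hi))).
  { unfold F. destruct (excluded_middle_informative (R i mu)) as [h|h]; [|tauto].
    do 2 f_equal. apply seg_eq. reflexivity. }
  rewrite EF in Hc.
  pose proof (code_upto_inj _ X Y (proj2_sig (f (exist _ i hi))) Hc y Hle) as H.
  unfold extend in H. destruct (excluded_middle_informative (R y lam)) as [h|h]; [|tauto].
  rewrite (seg_eq _ (exist _ y hy) (exist _ y h) eq_refl). exact H.
Qed.

End Guessing.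
End Singular.
End SuccessorCardinal.
End Ordinals.

Theorem proposition3p4 (K : Type) (R : K -> K -> Prop) (lam : K) :
  strict_wellorder R ->
  is_successor_cardinal_of R lam ->
  singular_cardinal R lam ->
  clubsuit_square R lam ->
  exists f : (seg R lam -> bool) -> K,
    (forall u v, f u = f v -> u = v) /\ (forall y, exists u, f u = y).
Proof.
  intros WO Hsc Hsing [C [_ Hguess]].
  assert (Hlim : is_limit R lam) by apply Hsing.
  destruct (pairing_exists K R WO lam Hsc Hlim) as [Psi [Psi_ge Psi_inj]].
  destruct (powerset_injection K R WO lam Hsc Hlim Hsing C Hguess Psi Psi_ge Psi_inj)
    as [h h_inj].
  exact (bijection_of_injection K R WO lam Hsc h h_inj).
Qed.
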